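(* Let $n\geq2$ and define $\tilde f:[2,\infty)\to\mathbb{R}$ by \[ \tilde f(x)=\frac{n+1-2x-x(x+n-2)+\frac1n(x^2-x)}{n-1-x(x+n-2)}. \] If $\bar x\geq2$ satisfies $\tilde f'(\bar x)=0$, then $\tilde f''(\bar x)<0$; i.e. every critical point of $\tilde f$ in $[2,\infty)$ is a strict local maximum. *)

From Stdlib Require Import Reals Lra Lia.
From Coquelicot Require Import Coquelicot.
Open Scope R_scope.

(* \tilde f(x) = (n+1-2x - x(x+n-2) + (x^2-x)/n) / (n-1 - x(x+n-2)),
   given by its closed formula on all of R (its denominator is < 0 on [2,oo)). *)
Definition ftilde (n : nat) (x : R) : R :=
  (INR n + 1 - 2 * x - x * (x + INR n - 2) + / INR n * (x ^ 2 - x))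
  / (INR n - 1 - x * (x + INR n - 2)).

(* Write ftilde = N / D with quadratics N and D.  Away from the zeros of D,
   ftilde' = P / D^2 with P = N' D - N D', so at a critical point P vanishes and
   ftilde'' = P' / D^2 = (N'' D - N D'') / D^2.  For these particular
   quadratics N'' D - N D'' = 2 (3 - 1/n) (1 - x), negative for x > 1. *)
From Stdlib Require Import Reals Lra.
From Coquelicot Require Import Coquelicot.
Open Scope R_scope.

Lemma locally_neq0 (g : R -> R) (x : R) :
  continuous g x -> g x <> 0 -> locally x (fun y => g y <> 0).
Proof. intros g_cont gx_neq0. apply (g_cont (fun z => z <> 0)), open_neq, gx_neq0. Qed.

Section QuotientAtCriticalPoint.

Variables (N D N' D' : R -> R) (x N'' D'' : R).
Hypothesis N_deriv : forall y, is_derive N y (N' y).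
Hypothesis D_deriv : forall y, is_derive D y (D' y).
Hypothesis N'_deriv : is_derive N' x N''.
Hypothesis D'_deriv : is_derive D' x D''.
Hypothesis Dx_neq0 : D x <> 0.

Let P (y : R) : R := N' y * D y - N y * D' y.

Let Derive_quotient_loc :
  locally x (fun y => Derive (fun t => N t / D t) y = P y / D y ^ 2).
Proof.
  assert (D_cont : continuous D x).
  { apply (ex_derive_continuous (K := R_AbsRing) D). exists (D' x). apply D_deriv. }
  refine (filter_imp _ _ _ (locally_neq0 _ _ D_cont Dx_neq0)).
  intros y Dy_neq0. apply is_derive_unique, is_derive_div; auto.
Qed.

Let P_deriv : is_derive P x (N'' * D x - N x * D'').
Proof.
  pose proof (is_derive_minus _ _ _ _ _
    (is_derive_mult _ _ _ _ _ N'_deriv (D_deriv x) Rmult_comm)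
    (is_derive_mult _ _ _ _ _ (N_deriv x) D'_deriv Rmult_comm)) as dP.
  replace (N'' * D x - N x * D'') with
    (minus (plus (mult N'' (D x)) (mult (N' x) (D' x)))
           (plus (mult (N' x) (D' x)) (mult (N x) D'')))
    by (unfold minus, plus, opp, mult; simpl; ring).
  exact dP.
Qed.

Lemma Derive_n_quotient_at_critical_point :
  Derive (fun t => N t / D t) x = 0 ->
  Derive_n (fun t => N t / D t) 2 x = (N'' * D x - N x * D'') / D x ^ 2.
Proof.
  intros crit.
  rewrite (locally_singleton _ _ Derive_quotient_loc) in crit.
  assert (Px0 : P x = 0).
  { apply Rmult_integral in crit as [Px0 | Dx2_inv0]; [exact Px0 |].
    exfalso. revert Dx2_inv0. apply Rinv_neq_0_compat, pow_nonzero, Dx_neq0. }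
  change (Derive (Derive (fun t => N t / D t)) x = (N'' * D x - N x * D'') / D x ^ 2).
  rewrite (Derive_ext_loc _ _ _ Derive_quotient_loc).
  erewrite is_derive_unique;
    [| exact (is_derive_div _ _ _ _ _ P_deriv (is_derive_pow _ 2 _ _ (D_deriv x))
                (pow_nonzero _ 2 Dx_neq0))].
  rewrite Px0. simpl. field. exact Dx_neq0.
Qed.

End QuotientAtCriticalPoint.

Definition ftilde_num (a y : R) : R :=
  a + 1 - 2 * y - y * (y + a - 2) + / a * (y ^ 2 - y).
Definition ftilde_den (a y : R) : R := a - 1 - y * (y + a - 2).
Definition ftilde_num' (a y : R) : R := - 2 - (2 * y + a - 2) + / a * (2 * y - 1).
Definition ftilde_den' (a y : R) : R := - (2 * y + a - 2).

Lemma is_derive_ftilde_num (a y : R) : is_derive (ftilde_num a) y (ftilde_num' a y).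
Proof. unfold ftilde_num, ftilde_num'. auto_derive; [easy | ring]. Qed.

Lemma is_derive_ftilde_num' (a y : R) : is_derive (ftilde_num' a) y (2 / a - 2).
Proof. unfold ftilde_num'. auto_derive; [easy | unfold Rdiv; ring]. Qed.

Lemma is_derive_ftilde_den (a y : R) : is_derive (ftilde_den a) y (ftilde_den' a y).
Proof. unfold ftilde_den, ftilde_den'. auto_derive; [easy | ring]. Qed.

Lemma is_derive_ftilde_den' (a y : R) : is_derive (ftilde_den' a) y (- 2).
Proof. unfold ftilde_den'. auto_derive; [easy | ring]. Qed.

Lemma ftilde_den_lt0 (a y : R) : 0 <= a -> 1 < y -> ftilde_den a y < 0.
Proof. intros. unfold ftilde_den. nra. Qed.

Lemma ftilde_num''_den_sub_num_den'' (a y : R) : a <> 0 ->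
  (2 / a - 2) * ftilde_den a y - ftilde_num a y * (- 2) = 2 * (3 - / a) * (1 - y).
Proof. intros. unfold ftilde_num, ftilde_den. field. assumption. Qed.

Theorem lemma4p1 (n : nat) (xbar : R) :
  (2 <= n)%nat -> 2 <= xbar ->
  Derive (ftilde n) xbar = 0 ->
  Derive_n (ftilde n) 2 xbar < 0.
Proof.
  intros n_ge2 xbar_ge2 crit.
  assert (a_ge2 : 2 <= INR n) by (apply (le_INR 2) in n_ge2; simpl in n_ge2; lra).
  assert (den_lt0 : ftilde_den (INR n) xbar < 0) by (apply ftilde_den_lt0; lra).
  change (ftilde n) with (fun t => ftilde_num (INR n) t / ftilde_den (INR n) t).
  rewrite (Derive_n_quotient_at_critical_point _ _ _ _ _ _ _
    (is_derive_ftilde_num _) (is_derive_ftilde_den _)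
    (is_derive_ftilde_num' _ _) (is_derive_ftilde_den' _ _)
    (Rlt_not_eq _ _ den_lt0) crit).
  rewrite ftilde_num''_den_sub_num_den'' by lra.
  apply Rdiv_neg_pos; [| apply pow2_gt_0; lra].
  assert (/ INR n <= / 2) by (apply Rinv_le_contravar; lra).
  nra.
Qed.
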